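(* Let $P$ be a $\mathcal{V}$-poset. If $P$ is not linearly ordered, then neither a greatest element nor a least element of $P$ (if it exists) is basic; if $P$ is a nonempty linearly ordered set, its least element is basic. Moreover, the status of elements does not change under the three operations generating $\mathcal{V}$-posets, except for linearly ordered sets: if $P'$ is obtained as a disjoint union of $\mathcal{V}$-posets, or by adding a new greatest element to a $\mathcal{V}$-poset $P$, or by adding a new least element to a $\mathcal{V}$-poset $P$ that is not linearly ordered, then every element of the original poset(s) that is basic (respectively non-basic, upper, lower) remains basic (respectively non-basic, upper, lower) in $P'$.
   Context: All posets are finite. A $\mathcal{V}$-poset is a poset that can be generated from the empty poset by repeatedly applying the operations: (1) disjoint union of $\mathcal{V}$-posets, (2) adding a new greatest element, (3) adding a new least element. An element $x$ of a $\mathcal{V}$-poset is basic if: (B.1) there are no two incomparable elements $u,v$ with $x>u$ and $x>v$; (B.2) there are no two incomparable elements $u,v$ with $x<u$ and $x<v$; (B.3) there is no element $u$ with $u<x$ such that for all $w\neq u,x$ one has ($u\ge w\iff x\ge w$) and ($u\le w\iff x\le w$). A non-basic element $u$ is an upper element if $u>b$ for some basic element $b$, and a lower element if $u<b$ for some basic element $b$. *)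

From HB Require Import structures.
From mathcomp Require Import ssreflect ssrfun ssrbool eqtype ssrnat seq choice fintype.
Set Implicit Arguments. Unset Strict Implicit. Unset Printing Implicit Defensive.

(* The V-posets are the structures
   generated (up to order isomorphism) by the operations below; they are
   automatically partial orders. *)
Record fposet := FPoset { car : finType; ple : rel car }.

Section Defs.
Variable P : fposet.
Notation le := (@ple P).

Definition plt (x y : car P) : bool := (x != y) && le x y.
Definition incomp (x y : car P) : Prop := ~~ le x y /\ ~~ le y x.

Definition linear : Prop := forall x y : car P, le x y \/ le y x.
Definition greatest (g : car P) : Prop := forall y, le y g.
Definition least (m : car P) : Prop := forall y, le m y.

Definition B1 (x : car P) : Prop :=
  ~ exists u v, [/\ plt u x, plt v x & incomp u v].
Definition B2 (x : car P) : Prop :=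
  ~ exists u v, [/\ plt x u, plt x v & incomp u v].
Definition B3 (x : car P) : Prop :=
  ~ exists u, plt u x /\
      forall w, w != u -> w != x ->
        ((le w u <-> le w x) /\ (le u w <-> le x w)).
Definition basic (x : car P) : Prop := [/\ B1 x, B2 x & B3 x].

Definition upper (u : car P) : Prop := ~ basic u /\ exists b, basic b /\ plt b u.
Definition lower (u : car P) : Prop := ~ basic u /\ exists b, basic b /\ plt u b.
End Defs.

Definition order_iso (P Q : fposet) : Prop :=
  exists f : car P -> car Q, bijective f /\
    forall x y, @ple P x y = @ple Q (f x) (f y).

Definition empty_poset : fposet := FPoset (fun (_ _ : void) => true).

Definition dunion (I : finType) (F : I -> fposet) : fposet :=
  @FPoset {i : I & car (F i)}
    (fun u v => (tag u == tag v) && @ple (F (tag u)) (tagged u) (tagged_as u v)).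

Definition dinj (I : finType) (F : I -> fposet) (i : I) (x : car (F i)) :
  car (dunion F) := Tagged (fun j => car (F j)) x.

Definition add_top (P : fposet) : fposet :=
  @FPoset (option (car P))
    (fun x y => match x, y with
                | _, None => true
                | None, Some _ => false
                | Some a, Some b => @ple P a b
                end).

Definition add_bot (P : fposet) : fposet :=
  @FPoset (option (car P))
    (fun x y => match x, y with
                | None, _ => true
                | Some _, None => false
                | Some a, Some b => @ple P a b
                end).

Inductive isV : fposet -> Prop :=
| isV_empty : isV empty_poset
| isV_union (I : finType) (F : I -> fposet) :
    (forall i, isV (F i)) -> isV (dunion F)
| isV_top P : isV P -> isV (add_top P)
| isV_bot P : isV P -> isV (add_bot P)
| isV_iso P Q : isV P -> order_iso P Q -> isV Q.

From mathcomp Require Import ssreflect ssrfun ssrbool eqtype ssrnat seq choice fintype.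
Set Implicit Arguments. Unset Strict Implicit.

(* Each of the three operations embeds the old poset P into the new one by an
   order embedding f, and every new element is either comparable to everything
   (an added top or bottom) or incomparable to all of f(P) (another component);
   in both cases it relates in the same way to all elements of f(P).  Thus the
   strict down- and up-sets of f x contain no new incomparable pairs, so (B.1)
   and (B.2) transfer, and a twin of f x as in (B.3) must lie in f(P).  The one
   exception is an added bottom, which is a twin of f x exactly when x is least
   in P; but the least element of a non-linear poset already violates (B.2). *)

Section Elements.
Variable P : fposet.
Implicit Types (g m u x : car P) (S : pred (car P)).

Definition chain S := ~ exists u v, [/\ S u, S v & incomp u v].

Definition twin u x := forall w, w != u -> w != x ->
  ((ple w u <-> ple w x) /\ (ple u w <-> ple x w)).

Definition comparable_to_all u := forall w, ple u w || ple w u.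

Lemma incomp_comparable_to_all u v :
  incomp u v -> ~ comparable_to_all u /\ ~ comparable_to_all v.
Proof.
by move=> [/negbTE uv /negbTE vu]; split=> [/(_ v) | /(_ u)]; rewrite uv vu.
Qed.

Lemma nonlinear_incomp : ~ linear P -> exists u v, incomp u v.
Proof.
move=> nonlin.
case: (boolP [exists u : car P, exists v : car P, ~~ ple u v && ~~ ple v u]).
  by move=> /existsP [u /existsP [v /andP [uv vu]]]; exists u, v.
move=> /existsPn noinc.
case: nonlin => u v; move/existsPn/(_ v): (noinc u).
by rewrite negb_and !negbK => /orP [] ->; [left | right].
Qed.

Lemma greatest_not_B1 g : ~ linear P -> greatest g -> ~ B1 g.
Proof.
move=> /nonlinear_incomp [u [v [uv vu]]] gg; apply; exists u, v.
by split=> //; rewrite /plt gg andbT; apply/eqP=> eq_g;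
  [move: vu | move: uv]; rewrite eq_g gg.
Qed.

Lemma least_not_B2 m : ~ linear P -> least m -> ~ B2 m.
Proof.
move=> /nonlinear_incomp [u [v [uv vu]]] lm; apply; exists u, v.
by split=> //; rewrite /plt lm andbT; apply/eqP=> eq_m;
  [move: uv | move: vu]; rewrite -eq_m lm.
Qed.

Lemma linear_least_basic m :
  antisymmetric (@ple P) -> linear P -> least m -> basic m.
Proof.
move=> antisym lin lm.
have no_incomp u v : ~ incomp u v.
  by move=> [uv vu]; case: (lin u v) => h; [move: uv | move: vu]; rewrite h.
split; [by move=> [u [v [_ _ /no_incomp]]] .. |].
by move=> [u [/andP [/eqP ne um] _]]; apply: ne; apply: antisym; rewrite um lm.
Qed.

End Elements.

Lemma isV_reflexive P : isV P -> reflexive (@ple P).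
Proof.
elim=> {P} [[] | I F _ refl [i a] | P _ refl [a|] | P _ refl [a|] |
  P Q _ refl [f [[g _ gK] f_le]] y] //=.
- by rewrite eqxx tagged_asE; apply: refl.
- by rewrite -(gK y) -f_le.
Qed.

Lemma isV_antisymmetric P : isV P -> antisymmetric (@ple P).
Proof.
elim=> {P} [[] | I F _ anti [i a] [j b] | P _ anti [a|] [b|] |
  P _ anti [a|] [b|] | P Q _ anti [f [[g _ gK] f_le]] y z] //=.
- case: (eqVneq i j) => //= eq_ij; subst j.
  by rewrite !tagged_asE => /anti ->.
- by move=> /anti ->.
- by move=> /anti ->.
- by rewrite -(gK y) -(gK z) -!f_le => /anti ->.
Qed.

Section OrderEmbedding.
Variables (P Q : fposet) (f : car P -> car Q).
Hypotheses (f_inj : injective f) (f_le : forall a b, ple (f a) (f b) = ple a b).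

Lemma plt_emb a b : plt (f a) (f b) = plt a b.
Proof. by rewrite /plt f_le (inj_eq f_inj). Qed.

Lemma incomp_emb a b : incomp (f a) (f b) <-> incomp a b.
Proof. by rewrite /incomp !f_le. Qed.

Lemma chain_emb (SP : pred (car P)) (SQ : pred (car Q)) :
  (forall a, SQ (f a) = SP a) ->
  (forall w, SQ w -> w \in codom f \/ comparable_to_all w) ->
  chain SP <-> chain SQ.
Proof.
move=> S_f S_img.
split=> [chainP [u [v [Su Sv uv]]] | chainQ [a [b [Sa Sb ab]]]].
- have [not_all_u not_all_v] := incomp_comparable_to_all uv.
  case: (S_img u Su) => [/codomP [a eq_u] | //]; subst u.
  case: (S_img v Sv) => [/codomP [b eq_v] | //]; subst v.
  by apply: chainP; exists a, b; rewrite -!S_f; split=> //; apply/incomp_emb.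
- apply: chainQ; exists (f a), (f b).
  by rewrite !S_f; split=> //; apply/incomp_emb.
Qed.

Definition uniform_off_image := forall w, w \notin codom f ->
  forall a b, ple w (f a) = ple w (f b) /\ ple (f a) w = ple (f b) w.

Lemma B3_emb_to x :
  (forall u, plt u (f x) -> twin u (f x) -> u \in codom f) -> B3 x -> B3 (f x).
Proof.
move=> twin_img B3x [u [ux tw]]; have /codomP [a eq_u] := twin_img u ux tw.
subst u; apply: B3x; exists a; split; first by rewrite -plt_emb.
by move=> w wa wx; have := tw (f w); rewrite !f_le !(inj_eq f_inj); apply.
Qed.

Lemma B3_emb_from x : uniform_off_image -> B3 (f x) -> B3 x.
Proof.
move=> unif B3fx [a [ax tw]]; apply: B3fx; exists (f a); split.
  by rewrite plt_emb.
move=> w wa wx; case: (boolP (w \in codom f)) => [/codomP [b eq_w] | off].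
- by subst w; rewrite !f_le; rewrite !(inj_eq f_inj) in wa wx; apply: tw.
- by have [-> ->] := unif w off a x.
Qed.

Lemma basic_emb x :
  (forall w, plt w (f x) -> w \in codom f \/ comparable_to_all w) ->
  (forall w, plt (f x) w -> w \in codom f \/ comparable_to_all w) ->
  (basic x -> forall u, plt u (f x) -> twin u (f x) -> u \in codom f) ->
  uniform_off_image ->
  basic x <-> basic (f x).
Proof.
move=> down_img up_img twin_img unif.
have B1_iff : B1 x <-> B1 (f x).
  exact: (chain_emb (SP := fun u => plt u x) (SQ := fun u => plt u (f x))
           (plt_emb^~ x) down_img).
have B2_iff : B2 x <-> B2 (f x).
  exact: (chain_emb (SP := plt x) (SQ := plt (f x)) (plt_emb x) up_img).
split=> [bx | [/B1_iff B1x /B2_iff B2x /(B3_emb_from unif) B3x]] //.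
by have [/B1_iff ? /B2_iff ? /(B3_emb_to (twin_img bx)) ?] := bx.
Qed.

Lemma status_emb : (forall x, basic x <-> basic (f x)) ->
  forall x, (basic x <-> basic (f x)) /\
            (upper x -> upper (f x)) /\ (lower x -> lower (f x)).
Proof.
move=> basic_iff x; split; first exact: basic_iff.
split=> -[not_bx [b [bb bx]]];
  (split; [by move/basic_iff | exists (f b)]);
  by rewrite plt_emb; split=> //; apply/basic_iff.
Qed.

End OrderEmbedding.

Section DisjointUnion.
Variables (I : finType) (F : I -> fposet) (i : I).

Lemma dinj_inj : injective (@dinj I F i).
Proof. by move=> a b /(congr1 (tagged_as (dinj a))); rewrite !tagged_asE. Qed.

Lemma dinj_le (a b : car (F i)) : ple (dinj a) (dinj b) = ple a b.
Proof. by rewrite /= eqxx tagged_asE. Qed.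

Lemma codom_dinj (w : car (dunion F)) :
  (w \in codom (@dinj I F i)) = (tag w == i).
Proof.
by case: w => j b; apply/codomP/eqP => [[a /(congr1 tag)] | /= eq_ji] //;
  subst; exists b.
Qed.

Lemma basic_dinj (x : car (F i)) : basic x <-> basic (dinj x).
Proof.
have comparable_in_image w :
    ple w (dinj x) || ple (dinj x) w -> w \in codom (@dinj I F i).
  by rewrite codom_dinj => /orP [] /andP [/eqP /= eq_tag _]; rewrite eq_tag.
apply: (basic_emb dinj_inj dinj_le).
- by move=> w /andP [_ le_w]; left; rewrite comparable_in_image ?le_w.
- by move=> w /andP [_ le_w]; left; rewrite comparable_in_image ?le_w ?orbT.
- by move=> _ u /andP [_ le_u] _; rewrite comparable_in_image ?le_u.
- move=> w; rewrite codom_dinj => /negbTE off a b.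
  by rewrite /= off eq_sym off.
Qed.

End DisjointUnion.

Section AddTopBottom.
Variable P : fposet.

Lemma Some_car_inj : injective (@Some (car P)).
Proof. by move=> a b []. Qed.

Lemma codom_Some (w : option (car P)) : (w \in codom Some) = w.
Proof. by case: w => [a|]; [rewrite codom_f | apply/codomP => -[]]. Qed.

Lemma basic_add_top (x : car P) :
  basic x <-> @basic (add_top P) (Some x).
Proof.
apply: (@basic_emb P (add_top P) Some Some_car_inj) => //.
- by case=> [b|] // _; left; rewrite codom_Some.
- by case=> [b|] _; rewrite codom_Some; [left | right; case].
- by move=> _ [b|] // _ _; rewrite codom_Some.
- by case=> [b|]; rewrite codom_Some.
Qed.

Lemma basic_add_bot (x : car P) :
  reflexive (@ple P) -> ~ linear P -> basic x <-> @basic (add_bot P) (Some x).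
Proof.
move=> refl nonlin; apply: (@basic_emb P (add_bot P) Some Some_car_inj) => //.
- by case=> [b|] _; rewrite codom_Some; [left | right; case].
- by case=> [b|] // _; left; rewrite codom_Some.
- move=> [_ B2x _] [b|] _ tw; rewrite codom_Some //; exfalso.
  apply: (least_not_B2 nonlin _ B2x) => y; case: (eqVneq y x) => [-> // | yx].
  have [_ [le_xy _]] := tw (Some y) isT (yx : Some y != Some x); exact: le_xy.
- by case=> [b|]; rewrite codom_Some.
Qed.

End AddTopBottom.

Theorem lemma3p6 :
  (* greatest / least elements of a non-linear V-poset are not basic *)
  (forall P : fposet, isV P -> ~ linear P ->
     (forall g : car P, greatest g -> ~ basic g) /\
     (forall m : car P, least m -> ~ basic m)) /\
  (* the least element of a nonempty linearly ordered V-poset is basic *)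
  (forall P : fposet, isV P -> linear P ->
     forall m : car P, least m -> basic m) /\
  (* disjoint union of V-posets preserves the status of elements *)
  (forall (I : finType) (F : I -> fposet), (forall i, isV (F i)) ->
     forall (i : I) (x : car (F i)),
       (basic x <-> basic (dinj x)) /\
       (upper x -> upper (dinj x)) /\
       (lower x -> lower (dinj x))) /\
  (* adding a new greatest element preserves the status of elements *)
  (forall P : fposet, isV P ->
     forall x : car P,
       (basic x <-> @basic (add_top P) (Some x)) /\
       (upper x -> @upper (add_top P) (Some x)) /\
       (lower x -> @lower (add_top P) (Some x))) /\
  (* adding a new least element to a non-linear V-poset preserves status *)
  (forall P : fposet, isV P -> ~ linear P ->
     forall x : car P,
       (basic x <-> @basic (add_bot P) (Some x)) /\
       (upper x -> @upper (add_bot P) (Some x)) /\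
       (lower x -> @lower (add_bot P) (Some x))).
Proof.
split.
  move=> P _ nonlin.
  by split=> [g /(greatest_not_B1 nonlin) | m /(least_not_B2 nonlin)] not_B [].
split.
  by move=> P /isV_antisymmetric antisym lin m; apply: linear_least_basic.
split.
  move=> I F _ i; apply: (status_emb (@dinj_inj I F i) (@dinj_le I F i)) => x.
  exact: basic_dinj.
split.
  move=> P _; apply: (@status_emb P (add_top P) Some (@Some_car_inj P)) => // x.
  exact: basic_add_top.
move=> P /isV_reflexive refl nonlin.
apply: (@status_emb P (add_bot P) Some (@Some_car_inj P)) => // x.
exact: basic_add_bot.
Qed.
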